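(* For every edge-colored hypergraph $H=(V,E,C,\ell)$ with weights $w_e \ge 0$, the optimal value of the node-weighted multiway cut LP relaxation on the reduced graph $G(H)$ is at most the optimal value of the \textsc{MinECC} LP relaxation on $H$. Moreover, the inequality can be strict: for $C=\{1,2,3\}$ and $H$ the star graph with center $v_0$, leaves $v_1,v_2,v_3$ and unit-weight edges $e_i=\{v_0,v_i\}$ of color $i$ ($i=1,2,3$), the \textsc{MinECC} LP relaxation has optimal value $2$ while the node-weighted multiway cut LP relaxation on $G(H)$ has optimal value $\frac32$.
   Context: An edge-colored hypergraph is $H=(V,E,C,\ell)$ with finite node set $V$, a multiset $E$ of nonempty subsets of $V$ (edges), a color set $C=[k]$, a map $\ell\colon E\to C$, and weights $w_e\ge 0$. The \textsc{MinECC} LP relaxation has variables $x_v^i$ ($v\in V,i\in C$), $x_e$ ($e\in E$) and is: minimize $\sum_{e} w_e x_e$ subject to $\sum_{i=1}^k x_v^i = k-1$ for all $v$; $x_e\ge x_v^{\ell(e)}$ for all $e$ and $v\in e$; $0\le x_v^i\le 1$; $0\le x_e\le 1$. The reduced graph $G(H)=(\hat V,\hat E)$ has node set $\hat V = T\cup V\cup V_E$, where $T=\{t_1,\dots,t_k\}$ are terminal nodes (one per color) and $V_E=\{v_e: e\in E\}$ has one node per edge of $H$; its edge set consists of $(v,v_e)$ for every $e\in E$ and $v\in e$, and $(t_{\ell(e)},v_e)$ for every $e\in E$. Nodes $v_e$ have weight $w_e$; nodes in $V\cup T$ have infinite weight. The node-weighted multiway cut LP relaxation on $G(H)$ has variables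 $d_u\ge 0$ for $u\in\hat V$ and $y_u^i$ for $u\in \hat V$, $i\in[k]$, with $d_u=0$ for all $u\in V\cup T$ (infinite-weight nodes), and is: minimize $\sum_{e\in E} w_e d_{v_e}$ subject to $y_b^i \le y_a^i + d_b$ and $y_a^i\le y_b^i + d_a$ for every edge $(a,b)\in\hat E$ and every $i\in[k]$; $y_{t_i}^i=0$ for all $i$; $y_{t_i}^j\ge 1$ for all $i\neq j$. (Equivalently: minimize $\sum_e w_e d_{v_e}$ subject to $d\ge 0$, $d=0$ on $V\cup T$, and $\sum_{u\in P} d_u\ge 1$ for every path $P$ in $G(H)$ between two distinct terminals.) *)

From HB Require Import structures.
From mathcomp Require Import all_boot all_order all_algebra.
From mathcomp Require Import classical_sets reals constructive_ereal ereal.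
Set Implicit Arguments. Unset Strict Implicit. Unset Printing Implicit Defensive.
Import Order.TTheory GRing.Theory Num.Theory.
Local Open Scope ring_scope.
Local Open Scope classical_set_scope.

(* An edge-colored hypergraph H = (V, E, C, l) with C = [k] (colors 'I_k,
   0-indexed), node set V : finType, the multiset of edges indexed by a
   finite type Eidx with edge : Eidx -> {set V} (each nonempty),
   color : Eidx -> 'I_k, and weights w : Eidx -> R. *)

Section LPs.
Variables (R : realType) (V Eidx : finType) (k : nat).
Variables (edge : Eidx -> {set V}) (color : Eidx -> 'I_k) (w : Eidx -> R).

Definition minecc_feasible (x : V -> 'I_k -> R) (xe : Eidx -> R) : Prop :=
  [/\ (forall v, \sum_(i < k) x v i = k.-1%:R),
      (forall e v, v \in edge e -> x v (color e) <= xe e),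
      (forall v i, 0 <= x v i /\ x v i <= 1) &
      (forall e, 0 <= xe e /\ xe e <= 1)].

Definition minecc_obj (xe : Eidx -> R) : R := \sum_(e : Eidx) w e * xe e.

(* optimal value (infimum, +oo if infeasible) *)
Definition minecc_opt : \bar R :=
  ereal_inf [set z : \bar R | exists x xe,
                minecc_feasible x xe /\ z = (minecc_obj xe)%:E].

(* node set  T + V + V_E : terminal t_i is inl (inl i), node v is inl (inr v),
   edge-node v_e is inr e. *)
Definition gnode : finType := (('I_k + V) + Eidx)%type.
Definition term (i : 'I_k) : gnode := inl (inl i).
Definition vnode (v : V) : gnode := inl (inr v).
Definition enode (e : Eidx) : gnode := inr e.

Definition gedge (a b : gnode) : Prop :=
  (exists e v, v \in edge e /\ a = vnode v /\ b = enode e) \/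
  (exists e, a = term (color e) /\ b = enode e).

Definition nwmc_feasible (d : gnode -> R) (y : gnode -> 'I_k -> R) : Prop :=
  (forall u, 0 <= d u) /\
  (forall v, d (vnode v) = 0) /\
  (forall i, d (term i) = 0) /\
  (forall a b, gedge a b -> forall i,
      y b i <= y a i + d b /\ y a i <= y b i + d a) /\
  (forall i, y (term i) i = 0) /\
  (forall i j, i != j -> 1 <= y (term i) j).

Definition nwmc_obj (d : gnode -> R) : R := \sum_(e : Eidx) w e * d (enode e).

Definition nwmc_opt : \bar R :=
  ereal_inf [set z : \bar R | exists d y,
                nwmc_feasible d y /\ z = (nwmc_obj d)%:E].
End LPs.

(* V = {v_0, v_1, v_2, v_3} = 'I_4 (v_0 = ord0), E = {e_1,e_2,e_3} = 'I_3,
   colors C = 'I_3, e_i = {v_0, v_{i}} of color i, unit weights. *)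
Definition star_edge (e : 'I_3) : {set 'I_4} := [set ord0; lift ord0 e].
Definition star_color (e : 'I_3) : 'I_3 := e.
Definition star_w (R : realType) (e : 'I_3) : R := 1.

(* A MinECC solution (x, xe) yields a multiway-cut solution of the same cost: charge xe e
   to the edge node v_e and read x v i as the distance from v to the terminal t_i.  As the
   x v i lie in [0, 1] and sum to k - 1, any two of them sum to at least 1, which is what
   the paths t_i - v_e - v - ... need.  On the star, the center v0 forces
   xe e_1 + xe e_2 + xe e_3 >= x v0 1 + x v0 2 + x v0 3 = 2, whereas in G(H) the edge nodes
   are only constrained pairwise, by the paths t_i - v_(e_i) - v0 - v_(e_j) - t_j, so
   d = 1/2 on every edge node is feasible. *)
From HB Require Import structures.
From mathcomp Require Import all_boot all_order all_algebra.
From mathcomp Require Import classical_sets reals constructive_ereal ereal lra.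
Set Implicit Arguments. Unset Strict Implicit. Unset Printing Implicit Defensive.
Import Order.TTheory GRing.Theory Num.Theory.
Local Open Scope ring_scope.

Lemma sum_pair_ge1 (R : realFieldType) k (f : 'I_k -> R) i j : i != j ->
  (forall l, 0 <= f l <= 1) -> \sum_l f l = k.-1%:R -> 1 <= f i + f j.
Proof.
move=> ij f01 sum_f.
have split_sum (g : 'I_k -> R) :
    \sum_l g l = g i + g j + \sum_(l | (l != i) && (l != j)) g l.
  by rewrite (bigD1 i) //= (bigD1 j) 1?eq_sym //= addrA.
have rest_le : \sum_(l | (l != i) && (l != j)) f l
               <= \sum_(l | (l != i) && (l != j)) (1 : R).
  by apply: ler_sum => l _; case/andP: (f01 l).
have k_gt0 : (0 < k)%N by apply: leq_ltn_trans (ltn_ord i).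
have card_k : k%:R = k.-1%:R + 1 :> R by rewrite natr1 prednK.
have := split_sum (fun=> 1); rewrite sumr_const card_ord /= => ones.
have := split_sum f; rewrite sum_f; lra.
Qed.

Section Relaxations.
Variables (R : realType) (V Eidx : finType) (k : nat).
Variables (edge : Eidx -> {set V}) (color : Eidx -> 'I_k) (w : Eidx -> R).

Local Notation gnode := (gnode V Eidx k).

Definition cut_of_minecc (xe : Eidx -> R) (u : gnode) : R :=
  if u is inr e then xe e else 0.

Definition dist_of_minecc (x : V -> 'I_k -> R) (xe : Eidx -> R)
    (u : gnode) (i : 'I_k) : R :=
  match u with
  | inl (inl j) => if i == j then 0 else 1
  | inl (inr v) => x v i
  | inr e => if i == color e then xe e else 1
  end.

Lemma nwmc_feasible_of_minecc x xe : minecc_feasible edge color x xe ->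
  nwmc_feasible edge color (cut_of_minecc xe) (dist_of_minecc x xe).
Proof.
case=> sum_x x_le_xe x01 xe01.
split; first by case=> [[|]|] //= e; case: (xe01 e).
do 2!split=> //; split; last first.
  by split=> [i | i j ij] /=; rewrite ?eqxx // eq_sym (negbTE ij).
move=> a b [[e [v [ve [-> ->]]]] | [e [-> ->]]] i /=; have [? ?] := xe01 e.
  have := x_le_xe e v ve.
  case: eqP => [<- | /eqP ie]; have [? ?] := x01 v i; first by split; lra.
  have : 1 <= x v i + x v (color e).
    by apply: sum_pair_ge1 ie _ (sum_x v) => l; have [-> ->] := x01 v l.
  by split; lra.
by case: eqP => _; split; lra.
Qed.

Lemma nwmc_opt_le_minecc_opt :
  (nwmc_opt edge color w <= minecc_opt edge color w)%E.
Proof.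
apply: ereal_inf_le_tmp => _ [x [xe [feas ->]]].
by exists (cut_of_minecc xe), (dist_of_minecc x xe); split;
  [exact: nwmc_feasible_of_minecc | ].
Qed.

(* The path t_(color e) - v_e - v - v_e' - t_(color e') between distinct terminals. *)
Lemma nwmc_shared_node_ge1 (d : gnode -> R) (y : gnode -> 'I_k -> R)
    (e e' : Eidx) (v : V) :
  nwmc_feasible edge color d y -> v \in edge e -> v \in edge e' ->
  color e != color e' -> 1 <= d (enode V k e) + d (enode V k e').
Proof.
move=> [_ [dv [dt [dE [y_tii y_tij]]]]] ve ve' col_ee'.
have to_term f : gedge edge color (term V Eidx (color f)) (enode V k f).
  by right; exists f.
have to_v f : v \in edge f -> gedge edge color (vnode Eidx k v) (enode V k f).
  by move=> vf; left; exists f, v.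
have [h1 _] := dE _ _ (to_term e') (color e').
have [_ h2] := dE _ _ (to_v e' ve') (color e').
have [h3 _] := dE _ _ (to_v e ve) (color e').
have [_ h4] := dE _ _ (to_term e) (color e').
move: h2 h4; rewrite dv dt.
have := y_tij _ _ col_ee'; have := y_tii (color e'); lra.
Qed.

End Relaxations.

Lemma star_minecc (R : realType) :
  minecc_opt star_edge star_color (@star_w R) = (2%:R)%:E.
Proof.
apply/le_anti/andP; split.
  apply: ereal_inf_lbound.
  exists (fun _ _ => 2 / 3 : R), (fun _ => 2 / 3 : R); split.
    split=> [v | e v _ | v i | e]; rewrite ?big_ord_recr ?big_ord0 /=; lra.
  by rewrite /minecc_obj /star_w !big_ord_recr big_ord0 /=; congr (_%:E); lra.
apply: le_ereal_inf_tmp => _ [x [xe [[sum_x x_le_xe _ _] ->]]].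
rewrite lee_fin -(sum_x ord0); apply: ler_sum => e _.
by rewrite /star_w mul1r; apply: x_le_xe; rewrite !inE eqxx.
Qed.

Lemma star_nwmc (R : realType) :
  nwmc_opt star_edge star_color (@star_w R) = (3%:R / 2%:R)%:E.
Proof.
apply/le_anti/andP; split.
  apply: ereal_inf_lbound.
  pose d (u : gnode 'I_4 'I_3 3) : R := if u is inr _ then 1 / 2 else 0.
  pose y (u : gnode 'I_4 'I_3 3) (i : 'I_3) : R :=
    match u with
    | inl (inl j) => if i == j then 0 else 1
    | inl (inr _) => 1 / 2
    | inr e => if i == e then 1 / 2 else 1
    end.
  exists d, y; split.
    split; first by case=> [[|]|] //= _; lra.
    do 2!split=> //; split.
      move=> a b [[e [v [_ [-> ->]]]] | [e [-> ->]]] i /=;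
        by case: eqP => _; split; lra.
    by split=> [i | i j ij] /=; rewrite ?eqxx // eq_sym (negbTE ij).
  by rewrite /nwmc_obj /star_w !big_ord_recr big_ord0 /=; congr (_%:E); lra.
apply: le_ereal_inf_tmp => _ [d [y [feas ->]]].
have center e : ord0 \in star_edge e by rewrite !inE eqxx.
have pair e e' : e != e' -> 1 <= d (enode 'I_4 3 e) + d (enode 'I_4 3 e').
  exact: nwmc_shared_node_ge1 feas (center e) (center e').
rewrite lee_fin /nwmc_obj /star_w !big_ord_recl big_ord0 /= !mul1r.
have := pair ord0 (lift ord0 ord0) isT.
have := pair ord0 (lift ord0 (lift ord0 ord0)) isT.
have := pair (lift ord0 ord0) (lift ord0 (lift ord0 ord0)) isT.
lra.
Qed.

Theorem theorem1 :
  (forall (R : realType) (V Eidx : finType) (k : nat)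
          (edge : Eidx -> {set V}) (color : Eidx -> 'I_k) (w : Eidx -> R),
      (forall e, edge e != finset.set0) ->
      (forall e, 0 <= w e) ->
      (nwmc_opt edge color w <= minecc_opt edge color w)%E) /\
  (forall R : realType,
      minecc_opt star_edge star_color (@star_w R) = (2%:R)%:E /\
      nwmc_opt star_edge star_color (@star_w R) = (3%:R / 2%:R)%:E).
Proof.
split; first by move=> R V Eidx k edge color w _ _; exact: nwmc_opt_le_minecc_opt.
by move=> R; split; [exact: star_minecc | exact: star_nwmc].
Qed.
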